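(* If $d$ is a proper tree decomposition of a chordal graph $g$, then $\mathrm{bags}(d)=\mathrm{MaxClq}(g)$.
   Context: A graph is chordal if every cycle of length greater than three has a chord. $\mathrm{MaxClq}(g)$ is the set of maximal cliques of $g$ (cliques not strictly contained in another clique). A tree decomposition of $g$ is a pair $(t,\beta)$ with $t$ a tree and $\beta:V(t)\to 2^{V(g)}$ such that every node of $g$ lies in some $\beta(v)$, every edge of $g$ is contained in some $\beta(v)$, and whenever $v$ lies on the path between $u$ and $w$ in $t$, $\beta(u)\cap\beta(w)\subseteq\beta(v)$. The sets $\beta(v)$ are bags; $\mathrm{bags}(d)$ is the set of bags. Write $d_1\sqsubseteq d_2$ if every bag of $d_1$ is contained in some bag of $d_2$. $d'$ strictly subsumes $d$ if $d'\sqsubseteq d$ and $\mathrm{bags}(d)\not\subseteq\mathrm{bags}(d')$; $d$ is proper if no tree decomposition of $g$ strictly subsumes it. *)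

From mathcomp Require Import all_boot.
Set Implicit Arguments. Unset Strict Implicit. Unset Printing Implicit Defensive.

Definition simple_graph (T : finType) (e : rel T) : Prop :=
  symmetric e /\ irreflexive e.

Definition is_cycle (T : finType) (e : rel T) (c : seq T) : Prop :=
  3 <= size c /\ ucycle e c.

Definition has_chord (T : finType) (e : rel T) (c : seq T) : Prop :=
  exists x y, [/\ x \in c, y \in c, e x y, next c x != y & prev c x != y].

Definition chordal (T : finType) (e : rel T) : Prop :=
  forall c : seq T, is_cycle e c -> 3 < size c -> has_chord e c.

Definition clique (T : finType) (e : rel T) (K : {set T}) : bool :=
  [forall x in K, forall y in K, (x != y) ==> e x y].

Definition MaxClq (T : finType) (e : rel T) : {set {set T}} :=
  [set K | maxset (clique e) K].

Definition is_tree (V : finType) (t : rel V) : Prop :=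
  [/\ simple_graph t, (0 < #|V|)%N,
      (forall u w : V, connect t u w) &
      (forall c : seq V, ~ is_cycle t c)].

Definition on_path (V : finType) (t : rel V) (u w v : V) : Prop :=
  exists p : seq V, [/\ path t u p, last u p = w, uniq (u :: p) & v \in u :: p].

Definition tree_decomposition (T : finType) (e : rel T)
    (V : finType) (t : rel V) (beta : V -> {set T}) : Prop :=
  [/\ is_tree t,
      (forall x : T, exists v, x \in beta v),
      (forall x y : T, e x y -> exists v, (x \in beta v) && (y \in beta v)) &
      (forall u v w : V, on_path t u w v -> beta u :&: beta w \subset beta v)].

Definition bags (T : finType) (V : finType) (beta : V -> {set T}) : {set {set T}} :=
  [set beta v | v in V].

Definition td_le (T : finType) (V1 : finType) (beta1 : V1 -> {set T})
    (V2 : finType) (beta2 : V2 -> {set T}) : Prop :=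
  forall v1 : V1, exists v2 : V2, beta1 v1 \subset beta2 v2.

Definition strictly_subsumes (T : finType) (V' : finType) (beta' : V' -> {set T})
    (V : finType) (beta : V -> {set T}) : Prop :=
  td_le beta' beta /\ ~ (bags beta \subset bags beta').

Definition proper_td (T : finType) (e : rel T)
    (V : finType) (t : rel V) (beta : V -> {set T}) : Prop :=
  tree_decomposition e t beta /\
  forall (V' : finType) (t' : rel V') (beta' : V' -> {set T}),
    tree_decomposition e t' beta' -> ~ strictly_subsumes beta' beta.

(* Every clique of the graph lies in a bag, by the Helly property of subtrees
   of a tree. A chordal graph has a tree decomposition whose bags are all
   cliques: either some vertex x is adjacent to all others and is added to every
   bag of a decomposition of the rest, or some r is not adjacent to x; then the
   component C of r in the graph minus the closed neighbourhood of x has a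
   neighbourhood N(C) that is a clique, since two non-adjacent vertices of N(C)
   together with x and a path through C would form a chordless cycle, and
   decompositions of C + N(C) and of the graph minus C glue along N(C). Such a
   clique decomposition is subsumed by any decomposition d, so if d is proper
   every bag of d is a bag of it, hence a clique. If a bag B of d were strictly
   contained in a clique, it would be strictly contained in another bag, and
   copying bags along the tree path towards it yields a decomposition subsumed
   by d in which B is no longer a bag, contradicting properness. *)

From mathcomp Require Import all_boot zify.
Set Implicit Arguments. Unset Strict Implicit. Unset Printing Implicit Defensive.

(** * Cliques, paths and rooted trees *)

Definition running_intersection (T V : finType) (t : rel V) (beta : V -> {set T}) :=
  forall u v w, on_path t u w v -> beta u :&: beta w \subset beta v.

Lemma cliqueP (T : finType) (e : rel T) (K : {set T}) :
  reflect {in K &, forall x y, x != y -> e x y} (clique e K).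
Proof.
apply: (iffP forallP) => [h x y xK yK xy | h x].
  by have := h x; rewrite xK /= => /forallP/(_ y); rewrite yK xy.
by apply/implyP => xK; apply/forallP => y; apply/implyP => yK; apply/implyP; exact: h.
Qed.

Lemma clique0 (T : finType) (e : rel T) : clique e set0.
Proof. by apply/cliqueP => x y; rewrite inE. Qed.

Section Paths.
Variables (V : finType) (t : rel V).

Lemma on_path_sym : symmetric t -> forall u w v, on_path t u w v -> on_path t w u v.
Proof.
move=> st u w v [p [pp lp up vp]].
have E : w :: rev (belast u p) = rev (u :: p) by rewrite -rev_rcons -lp -lastI.
exists (rev (belast u p)); split.
- by rewrite -lp rev_path (@eq_path _ _ t) // => a b; rewrite st.
- by rewrite -(last_cons w w) E rev_cons last_rcons.
- by rewrite E rev_uniq.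
- by rewrite E mem_rev.
Qed.

Lemma on_pathxx u v : on_path t u u v -> v = u.
Proof.
case=> [[|z p] [_ /= lp up]]; first by rewrite inE => /eqP.
by have := mem_last z p; rewrite lp => uin; move: up; rewrite /= uin.
Qed.

Lemma connect_uniq_path u w :
  connect t u w -> exists p, [/\ path t u p, last u p = w & uniq (u :: p)].
Proof. by move=> /connectP[p /shortenP[p' ? ? _] ->]; exists p'. Qed.

Lemma path_first_hit (P : pred V) a p : path t a p -> P (last a p) ->
  exists q r, [/\ p = q ++ r, P (last a q) & all (predC P) (belast a q)].
Proof.
elim: p a => [|z p IH] a /=; first by exists [::], [::].
move=> /andP[_ pz] Pl; case Pa: (P a); first by exists [::], (z :: p).
have [q [r [-> Pq Aq]]] := IH z pz Pl.
by exists (z :: q), r; rewrite /= Pa.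
Qed.

Lemma path_exit_edge (P : pred V) a p : path t a p -> P a -> ~~ P (last a p) ->
  exists x y, [/\ t x y, P x, ~~ P y & y \in a :: p].
Proof.
elim: p a => [|z p IH] a /=; first by move=> _ ->.
move=> /andP[az pz] Pa Pl; case Pz: (P z).
  have [x [y [txy Px Py yin]]] := IH z pz Pz Pl.
  by exists x, y; rewrite inE yin orbT.
by exists a, z; rewrite Pz !inE eqxx orbT.
Qed.

End Paths.

Lemma next_next_size (V : eqType) (c : seq V) u : uniq c -> u \in c ->
  next c (next c u) = u -> size c <= 2.
Proof.
move=> uc uin.
have Ec : rot (index u c) c = u :: (drop (index u c).+1 c ++ take (index u c) c).
  by rewrite /rot (drop_nth u) ?index_mem // nth_index.
set q := drop _ _ ++ _ in Ec.
have uc' : uniq (u :: q) by rewrite -Ec rot_uniq.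
rewrite -!(next_rot (index u c) uc) Ec -(size_rot (index u c)) Ec.
case: q uc' {Ec} => [|y [|z r]] //= /andP[]; rewrite !inE !negb_or => /and3P[uy uz _] _.
rewrite eqxx; case: (y =P u) => [yu|_]; first by rewrite yu eqxx in uy.
by rewrite eqxx => zu; rewrite zu eqxx in uz.
Qed.

Definition parent_rel (V : finType) (par : V -> V) : rel V :=
  fun u v => (u != v) && ((par u == v) || (par v == u)).

(* A rooted tree given by its parent map; the rank certifies that iterating
   the parent map reaches the root. *)
Definition rooted (V : finType) (par : V -> V) (r : V) :=
  par r = r /\ exists rank : V -> nat, forall u, u != r -> rank (par u) < rank u.

Section Rooted.
Variables (V : finType) (par : V -> V) (r : V).
Hypothesis rooted_r : rooted par r.

Lemma parent_rel_sym : symmetric (parent_rel par).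
Proof. by move=> u v; rewrite /parent_rel eq_sym orbC. Qed.

Lemma connect_root u : connect (parent_rel par) u r.
Proof.
case: rooted_r => par_r [rank rankP].
elim: {u}(rank u) {-2}u (leqnn (rank u)) => [|n IH] u le_u;
  (case: (u =P r) => [->|/eqP ur]; first exact: connect0).
  by have := rankP u ur; rewrite ltnNge (leq_trans le_u).
have lt_u := rankP u ur.
apply: (@connect_trans _ _ (par u)); last by apply: IH; rewrite -ltnS (leq_trans lt_u).
apply: connect1; rewrite /parent_rel eqxx andbT.
by apply/eqP=> E; move: lt_u; rewrite -E ltnn.
Qed.

(* A cycle cannot leave its node of maximal rank through two parent edges. *)
Lemma parent_rel_acyclic c : ~ is_cycle (parent_rel par) c.
Proof.
case: rooted_r => par_r [rank rankP] [sc /andP[cc uc]].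
have [u0 u0c] : exists u0, u0 \in c by case: c sc {cc uc} => // u0; exists u0; exact: mem_head.
case: (arg_maxnP rank u0c) => u uc_in um.
have to_parent z : z \in c -> parent_rel par u z -> par u = z.
  move=> zc /andP[uz /orP[/eqP//|/eqP pz]].
  have zr : z != r by apply: contraNneq uz => zr; rewrite -pz zr par_r.
  by have := rankP z zr; rewrite pz ltnNge (um z zc : rank z <= rank u).
have e1 : par u = next c u by apply: to_parent; rewrite ?mem_next //; exact: next_cycle.
have e2 : par u = prev c u.
  by apply: to_parent; rewrite ?mem_prev // parent_rel_sym; exact: prev_cycle.
have := next_next_size uc uc_in; rewrite -e1 e2 next_prev // => /(_ erefl).
by rewrite leqNgt (leq_trans _ sc).
Qed.

Lemma parent_rel_tree : is_tree (parent_rel par).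
Proof.
split.
- by split; [exact: parent_rel_sym | move=> u; rewrite /parent_rel eqxx].
- by apply/card_gt0P; exists r.
- move=> u w; apply: (connect_trans (connect_root u)).
  by rewrite (sym_connect_sym parent_rel_sym); exact: connect_root.
- exact: parent_rel_acyclic.
Qed.

End Rooted.

(** * The Helly property and bag surgery *)

Section Helly.
Variables (T V : finType) (t : rel V) (beta : V -> {set T}).
Hypothesis t_connected : forall u w, connect t u w.
Hypothesis beta_ri : running_intersection t beta.

(* The nodes whose bags contain [y] form a subtree, which the simple path
   [a :: q] enters at its last node. *)
Lemma first_hit_on_path y a q c : path t a q -> uniq (a :: q) ->
  y \in beta (last a q) -> all (fun z => y \notin beta z) (belast a q) ->
  y \in beta c -> on_path t a c (last a q).
Proof.
move=> paq uq ym Aq yc.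
have [s [pms lms ums]] := connect_uniq_path (t_connected (last a q) c).
have s_y z : z \in s -> y \in beta z.
  move=> zs; have : on_path t (last a q) c z by exists s; rewrite inE zs orbT.
  by move/beta_ri/subsetP; apply; rewrite inE ym yc.
exists (q ++ s); split.
- by rewrite cat_path paq.
- by rewrite last_cat.
- move: ums => /= /andP[mNs us].
  rewrite -[_ && _]/(uniq (a :: q ++ s)) -cat_cons cat_uniq uq us andbT /=.
  apply/hasPn => z zs; rewrite lastI mem_rcons inE negb_or.
  apply/andP; split; first by apply/eqP => zm; move: mNs; rewrite -zm zs.
  by apply/negP => /(allP Aq); rewrite s_y.
- by rewrite -cat_cons mem_cat mem_last.
Qed.

(* If [K :\ y] lies in the bag of [a], then [K] lies in the bag of the node
   where a path from [a] first meets a bag containing [y]. *)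
Lemma helly_bags (v0 : V) (K : {set T}) :
  {in K &, forall x y, exists v, (x \in beta v) && (y \in beta v)} ->
  exists v, K \subset beta v.
Proof.
elim: {K}_.+1 {-2}K (ltnSn #|K|) => // n IH K leK pairK.
case: (set_0Vmem K) => [->|[y yK]]; first by exists v0; exact: sub0set.
have [a Ka] : exists a, K :\ y \subset beta a.
  apply: IH; first by move: leK; rewrite (cardsD1 y K) yK.
  by move=> x z /setD1P[_ xK] /setD1P[_ zK]; exact: pairK.
have [b /andP[yb _]] := pairK y y yK yK.
have [p [pap lp up]] := connect_uniq_path (t_connected a b).
rewrite -lp in yb.
have [q [r [Ep Pq Aq]]] := path_first_hit (P := fun z => y \in beta z) pap yb.
have uq : uniq (a :: q) by move: up; rewrite Ep -cat_cons cat_uniq => /andP[].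
have paq : path t a q by move: pap; rewrite Ep cat_path => /andP[].
exists (last a q); apply/subsetP => x xK.
case: (x =P y) => [->//|/eqP xy].
have [c /andP[xc yc]] := pairK x y xK yK.
move/beta_ri/subsetP: (first_hit_on_path paq uq Pq Aq yc); apply.
by rewrite inE xc andbT (subsetP Ka) // !inE xy.
Qed.

Lemma clique_sub_bag (e : rel T) (S K : {set T}) (v0 : V) :
  {in S, forall x, exists v, x \in beta v} ->
  {in S &, forall x y, e x y -> exists v, (x \in beta v) && (y \in beta v)} ->
  K \subset S -> clique e K -> exists v, K \subset beta v.
Proof.
move=> coverS edgeS /subsetP KS /cliqueP cK; apply: (helly_bags v0) => x y xK yK.
case: (x =P y) => [<-|/eqP xy]; last exact: edgeS (KS x xK) (KS y yK) (cK x y xK yK xy).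
by have [v xv] := coverS x (KS x xK); exists v; rewrite xv.
Qed.

End Helly.

Lemma td_clique_sub_bag (T V : finType) (e : rel T) (t : rel V) beta (K : {set T}) :
  tree_decomposition e t beta -> clique e K -> exists v, K \subset beta v.
Proof.
case=> [[_ /card_gt0P[v0 _] conn _] cover edge ri].
by apply: (clique_sub_bag conn ri (S := setT) v0) => // x y _ _; exact: edge.
Qed.

Section CopyBag.
Variables (T V : finType) (t : rel V) (beta : V -> {set T}).
Hypotheses (t_tree : is_tree t) (beta_ri : running_intersection t beta).
Variables (v u : V).
Hypothesis tvu : t v u.

(* If the path passes through [u], then [b] comes after [u]: otherwise the
   edge [u v] would close a cycle. *)
Lemma bag_sub_from_neighbour p b : path t v p -> uniq (v :: p) -> b \in p ->
  beta u :&: beta (last v p) \subset beta b.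
Proof.
case: t_tree => [[st irr] _ _ acyclic] pvp up bp.
case uin: (u \in p); last first.
  have uv : u != v by apply: contraTneq tvu => ->; rewrite irr.
  apply: beta_ri; exists (v :: p); split => //=.
  - by rewrite st tvu.
  - by rewrite inE negb_or uv uin.
  - by rewrite !inE bp !orbT.
case/splitPr: uin pvp up bp => p1 p2.
rewrite cat_path last_cat => /andP[pv1 pu2] up; case/andP: pu2 => tlu pu2.
rewrite mem_cat => /orP[bp1|bp2].
  exfalso; apply: (acyclic (v :: rcons p1 u)); split.
    by case: p1 bp1 {up pu2 pv1 tlu} => //= ? ? _; rewrite size_rcons.
  apply/andP; split; first by rewrite /= !rcons_path last_rcons pv1 tlu /= st.
  by move: up; rewrite -cat_rcons -cat_cons => /(subseq_uniq (prefix_subseq _ _)).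
apply: beta_ri; exists p2; split => //.
by move: up; rewrite -cat_cons cat_uniq => /and3P[].
Qed.

Lemma running_intersection_copy_bag : beta v \subset beta u ->
  running_intersection t [eta beta with v |-> beta u].
Proof.
have st : symmetric t by case: t_tree => [[]].
move=> sub_vu a b c abc /=.
have from_v c' : on_path t v c' b -> b != v -> beta u :&: beta c' \subset beta b.
  move=> [p [pvp <- up bp]] bv; apply: bag_sub_from_neighbour pvp up _.
  by move: bp; rewrite inE (negbTE bv).
case: (b =P v) => [Eb|/eqP bv].
  rewrite Eb in abc.
  case: (a =P v) => [_|_]; first by rewrite subsetIl.
  case: (c =P v) => [_|_]; first by rewrite subsetIr.
  exact: subset_trans (beta_ri abc) sub_vu.
case: (a =P v) => [Ea|_]; case: (c =P v) => [Ec|_].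
- by rewrite Ea Ec in abc; move: bv; rewrite (on_pathxx abc) eqxx.
- by apply: from_v => //; rewrite -Ea.
- by rewrite setIC; apply: from_v => //; apply: on_path_sym => //; rewrite -Ec.
- exact: beta_ri.
Qed.

End CopyBag.

Lemma td_copy_bag (T V : finType) (e : rel T) (t : rel V) beta (v u : V) :
  tree_decomposition e t beta -> t v u -> beta v \subset beta u ->
  tree_decomposition e t [eta beta with v |-> beta u].
Proof.
move=> [t_tree cover edge ri] tvu sub_vu.
have grow z : beta z \subset [eta beta with v |-> beta u] z.
  by rewrite /=; case: eqP => [->|].
split => //.
- by move=> x; have [z xz] := cover x; exists z; exact: subsetP (grow z) _ xz.
- move=> x y exy; have [z /andP[xz yz]] := edge x y exy; exists z.
  by rewrite !(subsetP (grow z)).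
- exact: running_intersection_copy_bag.
Qed.

(* Copying the bag of a neighbour into a node whose bag is [B] removes one
   occurrence of [B]; along a path to a strict superset of [B] such a
   neighbour always exists. *)
Lemma td_drop_bag (T V : finType) (e : rel T) (t : rel V) beta (B : {set T}) w :
  tree_decomposition e t beta -> B \proper beta w ->
  exists beta', [/\ tree_decomposition e t beta', td_le beta' beta & B \notin bags beta'].
Proof.
elim: {beta}_.+1 {-2}beta (ltnSn #|[set z | beta z == B]|) w => // n IH beta.
case: (pickP (fun z => beta z == B)) => [v /eqP vB | noB] le_n w td proper_w; last first.
  exists beta; split => //; first by move=> z; exists z.
  by apply/imsetP => -[z _ /eqP]; rewrite eq_sym noB.
have [[_ _ conn _] _ _ ri] := td.
have [p [pvp lp up]] := connect_uniq_path (conn v w).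
have notB_w : beta (last v p) != B by rewrite lp eq_sym (proper_neq proper_w).
have [x [y [txy /eqP xB yNB yp]]] :=
  path_exit_edge (P := fun z => beta z == B) pvp (introT eqP vB) notB_w.
have By : B \subset beta y.
  have : on_path t v w y by exists p.
  move/ri; apply: subset_trans; rewrite vB subsetI subxx.
  by case/properP: proper_w.
have td1 : tree_decomposition e t [eta beta with x |-> beta y].
  by apply: td_copy_bag; rewrite ?xB.
set beta1 := [eta beta with x |-> beta y] in td1 *.
have yx : y != x by apply: contraNneq yNB => ->; rewrite xB.
have le1 : #|[set z | beta1 z == B]| < n.
  apply: (@leq_ltn_trans #|[set z | beta z == B] :\ x|).
    apply/subset_leq_card/subsetP => z; rewrite !inE /beta1 /=.
    by case: (z =P x) => [_ /eqP E|_ ->]; [rewrite E eqxx in yNB|].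
  by move: le_n; rewrite (cardsD1 x) inE xB eqxx.
have proper1 : B \proper beta1 y by rewrite /= (negbTE yx) properEneq By eq_sym yNB.
have [beta2 [td2 le21 notB2]] := IH beta1 le1 y td1 proper1.
exists beta2; split => // z; have [z' sub2] := le21 z.
exists (if z' == x then y else z'); apply: subset_trans sub2 _.
by rewrite /beta1 /=; case: (z' == x).
Qed.

(** * Chordless paths in chordal graphs *)

Definition chordless (T : eqType) (e : rel T) (s : T) (p : seq T) :=
  forall i j, i.+1 < j -> j <= size p -> ~~ e (nth s (s :: p) i) (nth s (s :: p) j).

Lemma path_shortcut (T : eqType) (e : rel T) s p i k : path e s p -> i < k -> k < size p ->
  e (nth s (s :: p) i) (nth s p k) ->
  [/\ path e s (take i p ++ drop k p), last s (take i p ++ drop k p) = last s p,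
      subseq (take i p ++ drop k p) p & size (take i p ++ drop k p) < size p].
Proof.
move=> pp ik kp eik.
have Ep : p = take k p ++ nth s p k :: drop k.+1 p by rewrite -drop_nth // cat_take_drop.
have last_i : last s (take i p) = nth s (s :: p) i.
  rewrite (last_nth s) size_take (ltn_trans ik kp).
  by rewrite -[s :: take i p]/(take i.+1 (s :: p)) nth_take.
split.
- rewrite cat_path take_path // last_i (drop_nth s kp) /= eik /=.
  by move: pp; rewrite {1}Ep cat_path /= => /and3P[].
- have -> : last s p = last (nth s p k) (drop k.+1 p) by rewrite {1}Ep last_cat.
  by rewrite last_cat last_i (drop_nth s kp).
- rewrite -{3}(cat_take_drop i p) cat_subseq ?subseq_refl //.
  by rewrite -(subnK (ltnW ik)) -drop_drop drop_subseq.
- rewrite size_cat size_take (ltn_trans ik kp) size_drop; lia.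
Qed.

Lemma chordless_subpath (T : eqType) (e : rel T) s p : path e s p ->
  exists q, [/\ path e s q, last s q = last s p, subseq q p & chordless e s q].
Proof.
elim: {p}_.+1 {-2}p (ltnSn (size p)) => // n IH p le_n pp.
case: (boolP [exists i : 'I_(size p).+1, exists j : 'I_(size p).+1,
    (i.+1 < j) && e (nth s (s :: p) i) (nth s (s :: p) j)]); last first.
  move=> /existsPn noChord; exists p; split => // i j ij jp.
  have := noChord (Ordinal (leq_trans (ltnW (ltnW ij)) jp : i < (size p).+1)).
  by move=> /existsPn/(_ (Ordinal (jp : j < (size p).+1))); rewrite /= ij.
case/existsP=> i /existsP[[[|j] jp]] //= /andP[ij eij].
have [pp' lp' sub' lt'] := path_shortcut (i := i) (k := j) pp ij jp eij.
have [q [pq lq subq cq]] := IH _ (leq_trans lt' le_n) pp'.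
by exists q; rewrite lq lp' (subseq_trans subq sub').
Qed.

Lemma next_cons_notin (T : eqType) (x a : T) (P : seq T) : x \notin P -> a \in P ->
  next (x :: P) a = nth x P (index a P).+1.
Proof.
move=> xP aP; rewrite next_nth inE aP orbT /=.
by case: (x =P a) => // xa; rewrite xa aP in xP.
Qed.

(* Closing a chordless path [s :: p] by a new vertex [x] into a cycle, the only
   edges between vertices of the path are the edges of the cycle. *)
Lemma chordless_cycle_next (T : eqType) (e : rel T) x s p a b :
  chordless e s p -> x \notin s :: p -> a \in s :: p -> b \in s :: p ->
  index a (s :: p) < index b (s :: p) -> e a b -> next (x :: s :: p) a = b.
Proof.
set P := s :: p => cp xP aP bP ab eab; rewrite next_cons_notin //.
case: (ltngtP (index a P).+1 (index b P)) => [ab'|ba'|->]; last exact: nth_index.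
  have jp : index b P <= size p by rewrite -ltnS index_mem.
  by have := cp _ _ ab' jp; rewrite !nth_index ?eab.
by move: ba'; rewrite ltnS leqNgt ab.
Qed.

Section ChordalSeparator.
Variables (T : finType) (e : rel T).
Hypotheses (e_simple : simple_graph e) (e_chordal : chordal e).
Variables (x s t0 : T).
Hypotheses (xs : e x s) (xt : e x t0) (s_neq_t : s != t0) (s_nadj_t : ~~ e s t0).

(* The cycle [x s p] has length at least four and can have no chord. *)
Lemma chordless_detour p : path e s p -> last s p = t0 -> uniq (s :: p) ->
  chordless e s p -> {in p, forall z, z != t0 -> (z != x) && ~~ e x z} -> False.
Proof.
case: e_simple => esym eirr pp lp up cp away.
set P := s :: p; set c := x :: P.
have xP : x \notin P.
  rewrite inE negb_or; apply/andP; split; first by apply: contraTneq xs => ->; rewrite eirr.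
  apply/negP => xp; case: (x =P t0) => [xt0|/eqP xt0]; first by move: xt; rewrite xt0 eirr.
  by have := away x xp xt0; rewrite eqxx.
have uc : uniq c by rewrite /c cons_uniq xP up.
have p2 : 2 <= size p.
  case: p pp lp {up cp away P c xP uc} => [_ st|z [|? ?]] //=.
    by move: s_neq_t; rewrite -st eqxx.
  by rewrite andbT => szs zt; move: s_nadj_t; rewrite -zt szs.
have next_x : next c x = s by rewrite /c /P /= eqxx.
have next_t : next c t0 = x.
  have tP : t0 \in P by rewrite -lp mem_last.
  by rewrite next_cons_notin // -lp index_last // nth_default.
have cyc : is_cycle e c.
  split; first by rewrite /c /P /=; lia.
  by rewrite /ucycle uc andbT /c /P /= rcons_path pp lp xs /= esym.
have [a [b [ac bc eab nab pab]]] := e_chordal cyc (p2 : 3 < size c).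
have nba : next c b != a by apply: contra pab => /eqP <-; rewrite prev_next.
have x_nbrs z : z \in c -> e x z -> (next c x == z) || (next c z == x).
  rewrite !inE => /orP[/eqP->|/orP[/eqP->|zp]]; rewrite ?eirr ?next_x ?eqxx //.
  case: (z =P t0) => [->|/eqP zt]; first by rewrite next_t eqxx orbT.
  by have /andP[_ /negbTE->] := away z zp zt.
case: (a =P x) => [ax|/eqP ax].
  by move: (x_nbrs b bc); rewrite -ax eab (negbTE nab) (negbTE nba) => /(_ isT).
case: (b =P x) => [bx|/eqP bx].
  by move: (x_nbrs a ac); rewrite -bx esym eab (negbTE nab) (negbTE nba) => /(_ isT).
have aP : a \in P by move: ac; rewrite inE (negbTE ax).
have bP : b \in P by move: bc; rewrite inE (negbTE bx).
case: (ltngtP (index a P) (index b P)) => [ab|ba|eq_ab].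
- by rewrite (chordless_cycle_next cp xP aP bP ab eab) eqxx in nab.
- have eba : e b a by rewrite esym.
  by rewrite (chordless_cycle_next cp xP bP aP ba eba) eqxx in nba.
- by move: eab; rewrite -(nth_index x aP) eq_ab nth_index // eirr.
Qed.

Lemma chordal_path_hits_nbhd p : path e s p -> last s p = t0 ->
  {in p, forall z, (z == t0) || (z != x) && ~~ e x z} -> False.
Proof.
move=> pp; case: (shortenP pp) => p1 pp1 up1 sub1 lp1 away.
have [q [pq lq subq cq]] := chordless_subpath pp1.
apply: (chordless_detour pq); rewrite ?lq //.
  by apply: subseq_uniq up1; rewrite /= eqxx.
move=> z /(mem_subseq subq)/sub1/away.
by case: (z == t0).
Qed.

End ChordalSeparator.

(** * Gluing clique tree decompositions *)

Section CutEdge.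
Variables (V : eqType) (t : rel V) (P : pred V) (p0 q0 : V).
Hypothesis cut_edge : forall y z, t y z -> P y -> ~~ P z -> y = p0 /\ z = q0.

Lemma path_crosses y p : path t y p -> P y -> ~~ all P p ->
  exists p1 p2, [/\ p = p1 ++ q0 :: p2, all P p1, last y p1 = p0 & ~~ P q0].
Proof.
elim: p y => //= z p IH y /andP[tyz pz] Py.
case Pz: (P z) => /= nall.
  have [p1 [p2 [-> A1 L1 Pq0]]] := IH z pz Pz nall.
  by exists (z :: p1), p2; rewrite /= Pz A1.
have [E1 E2] := cut_edge tyz Py (negbT Pz).
by exists [::], p; rewrite -E2 -E1 Pz.
Qed.

Hypothesis t_sym : symmetric t.

Lemma cut_edgeC y z : t y z -> predC P y -> ~~ predC P z -> y = q0 /\ z = p0.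
Proof. by rewrite t_sym /= negbK => tzy Py Pz; have [-> ->] := cut_edge tzy Pz Py. Qed.

Lemma path_stays_outside y p : path t y p -> ~~ P y -> p0 \notin p -> all (predC P) p.
Proof.
elim: p y => //= z p IH y /andP[tyz pz] Py; rewrite inE negb_or => /andP[zp nq].
case Pz: (P z); last by rewrite /= (IH z pz (negbT Pz) nq).
have [|_ E] := cut_edgeC tyz Py; first by rewrite /= Pz.
by rewrite E eqxx in zp.
Qed.

(* A simple path can cross the cut only once, through [p0 q0]. *)
Lemma path_same_side y p : path t y p -> P y -> P (last y p) -> uniq (y :: p) -> all P p.
Proof.
move=> pp Py Pl up; apply/negPn/negP => nall.
have [p1 [p2 [Ep _ L1 Pq0]]] := path_crosses pp Py nall.
have p0N : p0 \notin p2.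
  move: up; rewrite Ep -cat_cons cat_uniq => /and3P[_ /hasPn h _].
  apply/negP => p0in; have := h _ (mem_behead (p0in : p0 \in behead (q0 :: p2))).
  by rewrite -L1 mem_last.
have pq2 : path t q0 p2 by move: pp; rewrite Ep cat_path => /andP[_ /= /andP[]].
have A2 := path_stays_outside pq2 Pq0 p0N.
move: Pl; rewrite Ep last_cat /=.
have := mem_last q0 p2; rewrite inE => /orP[/eqP->|/(allP A2)/= h]; first by rewrite (negbTE Pq0).
by rewrite (negbTE h).
Qed.

End CutEdge.

Definition clique_td_on (T V : finType) (e : rel T) (S : {set T}) (t : rel V)
    (beta : V -> {set T}) :=
  [/\ forall v, beta v \subset S, forall v, clique e (beta v),
      {in S, forall x, exists v, x \in beta v},
      {in S &, forall x y, e x y -> exists v, (x \in beta v) && (y \in beta v)} &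
      running_intersection t beta].

Lemma all_is_inl (A B : Type) (p : seq (A + B)) : all is_inl p -> exists q, p = map inl q.
Proof.
elim: p => [|[x|x] p IH] //=; first by exists [::].
by move=> /IH[q ->]; exists (x :: q).
Qed.

Lemma all_is_inr (A B : Type) (p : seq (A + B)) :
  all (predC is_inl) p -> exists q, p = map inr q.
Proof.
elim: p => [|[x|x] p IH] //=; first by exists [::].
by move=> /IH[q ->]; exists (x :: q).
Qed.

Section Glue.
Variables (T : finType) (e : rel T).
Variables (VA VB : finType) (parA : VA -> VA) (rA : VA) (bA : VA -> {set T}).
Variables (parB : VB -> VB) (rB : VB) (bB : VB -> {set T}) (a : VA).
Hypotheses (rootedA : rooted parA rA) (rootedB : rooted parB rB).

(* The tree of [B] is hung below the node [a] of the tree of [A]. *)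
Definition glue_parent (z : VB + VA) : VB + VA :=
  match z with
  | inl u => if u == rB then inr a else inl (parB u)
  | inr u => inr (parA u)
  end.

Definition glue_bag (z : VB + VA) : {set T} :=
  match z with inl u => bB u | inr u => bA u end.

Local Notation glued := (parent_rel glue_parent).

Lemma glue_rel_ll u v : glued (inl u) (inl v) = parent_rel parB u v.
Proof.
case: rootedB => par_r _; rewrite /parent_rel /=.
have inlE (x y : VB) : (inl x == inl y :> VB + VA) = (x == y) by [].
have inlrE (x : VB) (y : VA) : (inr y == inl x :> VB + VA) = false by [].
rewrite !inlE.
case: (u =P rB) => [->|/eqP ur]; case: (v =P rB) => [->|/eqP vr] //=;
  rewrite ?par_r ?eqxx ?inlE //=.
- by rewrite eq_sym (negbTE vr).
- by rewrite inlrE [rB == u]eq_sym (negbTE ur).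
Qed.

Lemma glue_rel_lr u v : glued (inl u) (inr v) = (u == rB) && (v == a).
Proof. by rewrite /parent_rel /=; case: (u =P rB) => //= _; rewrite orbF eq_sym. Qed.

Lemma glue_rooted : rooted glue_parent (inr rA).
Proof.
case: rootedA => prA [rankA rankAP]; case: rootedB => prB [rankB rankBP].
split; first by rewrite /= prA.
exists (fun z => match z with
                 | inl u => rankB u + (\max_(v : VA) rankA v).+1
                 | inr u => rankA u end).
case=> u /=; last exact: rankAP.
move=> _; case: (u =P rB) => [_|/eqP ur]; last by rewrite ltn_add2r; apply: rankBP.
by apply: ltn_addl; rewrite ltnS leq_bigmax.
Qed.

Lemma glue_path_l x p : path glued (inl x) (map inl p) = path (parent_rel parB) x p.
Proof. by elim: p x => //= y p IH x; rewrite glue_rel_ll IH. Qed.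

Lemma glue_path_r x p : path glued (inr x) (map inr p) = path (parent_rel parA) x p.
Proof. by elim: p x => //= y p IH x; rewrite IH. Qed.

Lemma glue_cut y z : glued y z -> is_inl y -> ~~ is_inl z -> y = inl rB /\ z = inr a.
Proof. by case: y z => [y|//] [//|z]; rewrite glue_rel_lr => /andP[/eqP-> /eqP->]. Qed.

Lemma glue_on_path_l ux wx p v : path glued (inl ux) p -> last (inl ux) p = inl wx ->
  uniq (inl ux :: p) -> all is_inl p -> v \in inl ux :: p ->
  exists2 v', on_path (parent_rel parB) ux wx v' & v = inl v'.
Proof.
move=> pp lp up /all_is_inl[q Ep]; rewrite Ep -(map_cons inl) in pp lp up * => /mapP[v' v'q ->].
exists v' => //; exists q; split => //; first by rewrite -glue_path_l.
- by move: lp; rewrite last_map => -[].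
- by move: up; rewrite map_inj_uniq // => ? ? [].
Qed.

Lemma glue_on_path_r ux wx p v : path glued (inr ux) p -> last (inr ux) p = inr wx ->
  uniq (inr ux :: p) -> all (predC is_inl) p -> v \in inr ux :: p ->
  exists2 v', on_path (parent_rel parA) ux wx v' & v = inr v'.
Proof.
move=> pp lp up /all_is_inr[q Ep]; rewrite Ep -(map_cons inr) in pp lp up * => /mapP[v' v'q ->].
exists v' => //; exists q; split => //; first by rewrite -glue_path_r.
- by move: lp; rewrite last_map => -[].
- by move: up; rewrite map_inj_uniq // => ? ? [].
Qed.

Variables (SA SB N : {set T}).
Hypotheses (tdA : clique_td_on e SA (parent_rel parA) bA)
           (tdB : clique_td_on e SB (parent_rel parB) bB).
Hypotheses (N_sub_a : N \subset bA a) (N_sub_rB : N \subset bB rB).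
Hypothesis SAB_sub_N : SA :&: SB \subset N.

Lemma glue_ri_ll ux wx p v : path glued (inl ux) p -> last (inl ux) p = inl wx ->
  uniq (inl ux :: p) -> v \in inl ux :: p -> bB ux :&: bB wx \subset glue_bag v.
Proof.
case: tdB => _ _ _ _ riB pp lp up vp.
have Pl : is_inl (last (inl ux) p) by rewrite lp.
have := path_same_side glue_cut (@parent_rel_sym _ _) pp isT Pl up.
by move=> /(glue_on_path_l pp lp up)/(_ vp)[v' /riB ? ->].
Qed.

Lemma glue_ri_rr ux wx p v : path glued (inr ux) p -> last (inr ux) p = inr wx ->
  uniq (inr ux :: p) -> v \in inr ux :: p -> bA ux :&: bA wx \subset glue_bag v.
Proof.
case: tdA => _ _ _ _ riA pp lp up vp.
have Pl : predC is_inl (last (inr ux) p) by rewrite lp.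
have cutC := cut_edgeC glue_cut (@parent_rel_sym _ _).
have := path_same_side cutC (@parent_rel_sym _ _) pp isT Pl up.
by move=> /(glue_on_path_r pp lp up)/(_ vp)[v' /riA ? ->].
Qed.

Lemma glue_ri_lr ux wx p v : path glued (inl ux) p -> last (inl ux) p = inr wx ->
  uniq (inl ux :: p) -> v \in inl ux :: p -> bB ux :&: bA wx \subset glue_bag v.
Proof.
case: tdA => subA _ _ _ riA; case: tdB => subB _ _ _ riB pp lp up vp.
have nall : ~~ all is_inl p.
  by apply/negP => /allP all_p; have := mem_last (inl ux) p; rewrite lp inE /= => /all_p.
have [p1 [p2 [Ep A1 L1 _]]] := path_crosses glue_cut pp isT nall.
rewrite Ep in pp up vp lp.
move: pp; rewrite cat_path L1 => /andP[pp1 /andP[_ pp2]].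
move: up; rewrite -cat_cons cat_uniq => /and3P[up1 /hasPn disj up2].
have rBN : inl rB \notin p2.
  apply/negP => rBp2; have := disj _ (mem_behead (rBp2 : inl rB \in behead (inr a :: p2))).
  by rewrite -L1 mem_last.
have A2 := path_stays_outside glue_cut (@parent_rel_sym _ _) pp2 isT rBN.
apply/subsetP => x /setIP[xu xw].
have xN : x \in N by rewrite (subsetP SAB_sub_N) // inE (subsetP (subA wx)) ?(subsetP (subB ux)).
move: vp; rewrite -cat_cons mem_cat => /orP[vp1|vp2].
  have [v' /riB/subsetP ri_v' ->] := glue_on_path_l pp1 L1 up1 A1 vp1.
  by rewrite ri_v' // inE xu (subsetP N_sub_rB).
rewrite last_cat L1 in lp.
have [v' /riA/subsetP ri_v' ->] := glue_on_path_r pp2 lp up2 A2 vp2.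
by rewrite ri_v' // inE xw (subsetP N_sub_a).
Qed.

Lemma glue_clique_td : symmetric e ->
  {in SA :\: SB & SB :\: SA, forall y z, ~~ e y z} ->
  clique_td_on e (SA :|: SB) glued glue_bag.
Proof.
move=> e_sym no_cross; have [subA clA covA edgA _] := tdA; have [subB clB covB edgB _] := tdB.
split.
- case=> u /=; first by rewrite (subset_trans (subB u)) ?subsetUr.
  by rewrite (subset_trans (subA u)) ?subsetUl.
- by case=> u; [exact: clB | exact: clA].
- move=> x; rewrite inE => /orP[/covA[v xv]|/covB[v xv]]; [by exists (inr v) | by exists (inl v)].
- move=> x y xS yS exy.
  have [/andP[xA yA]|notA] := boolP ((x \in SA) && (y \in SA)).
    by have [v ?] := edgA x y xA yA exy; exists (inr v).
  have [/andP[xB yB]|notB] := boolP ((x \in SB) && (y \in SB)).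
    by have [v ?] := edgB x y xB yB exy; exists (inl v).
  have : (x \in SA :\: SB) && (y \in SB :\: SA) || (y \in SA :\: SB) && (x \in SB :\: SA).
    move: xS yS notA notB; rewrite !inE.
    by case: (x \in SA); case: (x \in SB); case: (y \in SA); case: (y \in SB).
  case/orP => /andP[h1 h2]; move: (no_cross _ _ h1 h2); first by rewrite exy.
  by rewrite e_sym exy.
- move=> [ux|ux] v [wx|wx] [p [pp lp up vp]].
  + exact: glue_ri_ll pp lp up vp.
  + exact: glue_ri_lr pp lp up vp.
  + have [q [pq lq uq vq]] := on_path_sym (@parent_rel_sym _ _) (ex_intro _ p (And4 pp lp up vp)).
    by rewrite setIC; exact: glue_ri_lr pq lq uq vq.
  + exact: glue_ri_rr pp lp up vp.
Qed.
End Glue.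

(** * Clique tree decompositions of chordal graphs *)

(* Keeping [K] inside the root bag is what lets two such decompositions be
   glued along a clique separator. *)
Definition rooted_clique_td (T : finType) (e : rel T) (S K : {set T}) :=
  exists (V : finType) (par : V -> V) (r : V) (beta : V -> {set T}),
    [/\ rooted par r, clique_td_on e S (parent_rel par) beta & K \subset beta r].

Lemma clique_setU1 (T : finType) (e : rel T) (x : T) (B : {set T}) : symmetric e ->
  {in B, forall z, z != x -> e x z} -> clique e B -> clique e (x |: B).
Proof.
move=> e_sym xB /cliqueP cB; apply/cliqueP => y z; rewrite !inE.
move=> /orP[/eqP->|yB] /orP[/eqP->|zB]; rewrite ?eqxx // => yz.
- by apply: xB; rewrite // eq_sym.
- by rewrite e_sym; apply: xB.
- exact: cB.
Qed.

Section Construction.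
Variables (T : finType) (e : rel T).
Hypothesis e_simple : simple_graph e.

Lemma rooted_clique_td0 : rooted_clique_td e set0 set0.
Proof.
exists unit, id, tt, (fun _ => set0); split => //.
- by split => //; exists (fun _ => 0) => -[].
- split; [by move=> _; exact: sub0set | by move=> _; exact: clique0 | | |].
  + by move=> x; rewrite inE.
  + by move=> x y; rewrite inE.
  + by move=> *; rewrite setI0 sub0set.
Qed.

Lemma rooted_clique_td_glue (SA SB N K : {set T}) :
  rooted_clique_td e SA K -> rooted_clique_td e SB N -> N \subset SA -> clique e N ->
  SA :&: SB \subset N -> {in SA :\: SB & SB :\: SA, forall y z, ~~ e y z} ->
  rooted_clique_td e (SA :|: SB) K.
Proof.
move=> [VA [parA [rA [bA [rtA tdA KA]]]]] [VB [parB [rB [bB [rtB tdB NB]]]]] NSA cN SAB no_cross.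
have [_ _ covA edgA riA] := tdA.
have [_ _ conn _] := parent_rel_tree rtA.
have [a Na] := clique_sub_bag conn riA rA covA edgA NSA cN.
exists (VB + VA)%type, (glue_parent parA parB rB a), (inr rA), (glue_bag bA bB); split => //.
- exact: glue_rooted.
- exact: (glue_clique_td rtB tdA tdB Na NB SAB (proj1 e_simple) no_cross).
Qed.

Lemma rooted_clique_td_add_universal (S K : {set T}) x : x \in S ->
  {in S, forall z, z != x -> e x z} -> rooted_clique_td e (S :\ x) (K :\ x) ->
  K \subset S -> rooted_clique_td e S K.
Proof.
case: e_simple => e_sym e_irr xS univ [V [par [r [beta [rt [sub cl cov edg ri] Kr]]]]] KS.
have beta_S v : {subset beta v <= S :\ x} by apply/subsetP.
have inS y : y \in S -> y != x -> y \in S :\ x by rewrite in_setD1 => ? ->.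
exists V, par, r, (fun v => x |: beta v); split => //.
- split.
  + by move=> v; rewrite subUset sub1set xS (subset_trans (sub v)) ?subD1set.
  + move=> v; apply: clique_setU1 (cl v) => // z /beta_S.
    by rewrite in_setD1 => /andP[_ zS]; exact: univ.
  + move=> z zS; case: (z =P x) => [->|/eqP zx]; first by exists r; rewrite setU11.
    by have [v zv] := cov z (inS z zS zx); exists v; rewrite setU1r.
  + move=> y z yS zS eyz.
    have [yx|/eqP yx] := y =P x; have [zx|/eqP zx] := z =P x.
    * by move: eyz; rewrite yx zx e_irr.
    * by have [v zv] := cov z (inS z zS zx); exists v; rewrite yx setU11 setU1r.
    * by have [v yv] := cov y (inS y yS yx); exists v; rewrite zx setU11 setU1r.
    * have [v /andP[yv zv]] := edg y z (inS y yS yx) (inS z zS zx) eyz.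
      by exists v; rewrite !setU1r.
  + move=> u v w /ri/subsetP uvw; apply/subsetP => z; rewrite !inE.
    by case: (z =P x) => //= _ /andP[zu zw]; apply: uvw; rewrite inE zu zw.
- apply/subsetP => z zK; rewrite !inE; case: (z =P x) => //= /eqP zx.
  by apply: (subsetP Kr); rewrite in_setD1 zx zK.
Qed.

Hypothesis e_chordal : chordal e.

Section Separator.
Variables (S : {set T}) (x r0 : T).
Hypotheses (xS : x \in S) (r0S : r0 \in S) (r0x : r0 != x) (x_nadj_r0 : ~~ e x r0).

(* [C] is the component of [r0] in [S] minus the closed neighbourhood of [x],
   and [NC] its neighbourhood in [S]: [NC] separates [C] from [x]. *)
Let R := [set z in S | (z != x) && ~~ e x z].
Let eR := [rel u v | [&& e u v, u \in R & v \in R]].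
Let C := [set z | connect eR r0 z].
Let NC := [set s in S :\: C | [exists c in C, e s c]].

Lemma path_eR_R y p : path eR y p -> all [in R] p.
Proof. by elim: p y => //= z p IH y /andP[/and3P[_ _ zR] /IH->]; rewrite andbT. Qed.

Lemma C_sub_R : {subset C <= R}.
Proof.
move=> z; rewrite inE => /connectP[p /path_eR_R/allP pR ->].
have := mem_last r0 p; rewrite inE => /orP[/eqP->|/pR//].
by rewrite inE r0S r0x x_nadj_r0.
Qed.

Lemma NC_adj_x : {in NC, forall s, e x s}.
Proof.
case: e_simple => e_sym _ s; rewrite !inE => /andP[/andP[sC sS] /existsP[c /andP[cC esc]]].
apply: contraNT sC => x_nadj_s; have cR := C_sub_R cC.
have sx : s != x.
  by move: (cR); rewrite inE => /and3P[_ _ x_nadj_c]; apply: contraNneq x_nadj_c => <-.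
apply: (@connect_trans _ _ c); first by rewrite inE in cC.
by apply: connect1; rewrite /= e_sym esc cR inE sS sx.
Qed.

Lemma NC_clique : clique e NC.
Proof.
case: e_simple => e_sym _; apply/cliqueP => s t sN tN st; apply/negPn/negP => s_nadj_t.
have xs := NC_adj_x sN; have xt := NC_adj_x tN.
move: sN tN; rewrite !inE => /andP[_ /existsP[c1 /andP[c1C e1]]].
move=> /andP[_ /existsP[c2 /andP[c2C e2]]].
have eR_sym : symmetric eR by move=> u v; apply/and3P/and3P => -[? ? ?]; rewrite e_sym.
have /connectP[q pq lq] : connect eR c1 c2.
  apply: (@connect_trans _ _ r0); last by rewrite inE in c2C.
  by rewrite (sym_connect_sym eR_sym); rewrite inE in c1C.
apply: (chordal_path_hits_nbhd e_simple e_chordal xs xt st s_nadj_t (p := c1 :: rcons q t)).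
- rewrite /= e1 rcons_path -lq e_sym e2 andbT.
  by apply: sub_path pq => u v /and3P[].
- by rewrite /= last_rcons.
- move=> z; rewrite -rcons_cons mem_rcons inE => /orP[->//|zq].
  have : z \in R.
    move: zq; rewrite inE => /orP[/eqP->|/(allP (path_eR_R pq))//]; exact: C_sub_R.
  by rewrite inE => /and3P[_ -> ->]; rewrite orbT.
Qed.

Lemma C_NC_separate : {in C & S :\: (C :|: NC), forall y z, ~~ e y z}.
Proof.
move=> y z yC; rewrite !inE negb_or => /andP[/andP[zC zNC] zS]; apply: contraNN zNC => eyz.
by rewrite zC zS /=; apply/existsP; exists y; rewrite yC (proj1 e_simple).
Qed.

Lemma C_sub_S : C \subset S.
Proof. by apply/subsetP => z /C_sub_R; rewrite inE => /andP[]. Qed.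

Lemma NC_sub_S : NC \subset S.
Proof. by apply/subsetP => z; rewrite !inE => /andP[/andP[]]. Qed.

Lemma card_C_NC : #|C :|: NC| < #|S|.
Proof.
apply/proper_card/properP; split; first by rewrite subUset C_sub_S NC_sub_S.
exists x => //; rewrite inE negb_or; apply/andP; split.
  by apply/negP => /C_sub_R; rewrite inE eqxx andbF.
by apply/negP => /NC_adj_x; rewrite (proj2 e_simple).
Qed.

Lemma card_S_C : #|S :\: C| < #|S|.
Proof.
apply/proper_card/properP; split; first exact: subsetDl.
by exists r0; rewrite // !inE connect0.
Qed.

Lemma S_C_NC : S = (S :\: C) :|: (C :|: NC).
Proof. by rewrite setUA [_ :|: C]setUC -{1}(setIidPr C_sub_S) setID (setUidPl NC_sub_S). Qed.

Lemma C_NC_meet : (C :|: NC) :&: (S :\: C) \subset NC.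
Proof. by apply/subsetP => z; rewrite !inE; case: (connect eR r0 z) => //= /andP[]. Qed.

Lemma C_NC_no_cross :
  {in (C :|: NC) :\: (S :\: C) & (S :\: C) :\: (C :|: NC), forall y z, ~~ e y z}.
Proof.
move=> y z; rewrite !in_setD negb_and negbK => /andP[yC_S yCN] /andP[zCN /andP[_ zS]].
apply: C_NC_separate; last by rewrite in_setD zCN.
case/orP: yC_S => // yNS; case/setUP: yCN => // /(subsetP NC_sub_S) yS.
by rewrite yS in yNS.
Qed.

Lemma clique_sub_S_C_or_C_NC (K : {set T}) : K \subset S -> clique e K ->
  K \subset S :\: C \/ K \subset C :|: NC.
Proof.
move=> KS cK; have [KS2|/subsetPn[k kK kNS2]] := boolP (K \subset S :\: C); [by left | right].
have kC : k \in C by move: kNS2; rewrite in_setD (subsetP KS k kK) andbT negbK.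
apply/subsetP => z zK; apply/negPn/negP => zN.
have zk : z != k by apply: contraNneq zN => ->; rewrite inE kC.
have ekz : e k z by apply: (cliqueP _ _ cK) => //; rewrite eq_sym.
have := C_NC_separate kC (_ : z \in S :\: (C :|: NC)).
by rewrite in_setD zN (subsetP KS z zK) ekz => /(_ isT).
Qed.

Lemma rooted_clique_td_separate (K : {set T}) :
  (forall S' K' : {set T}, #|S'| < #|S| -> K' \subset S' -> clique e K' ->
     rooted_clique_td e S' K') ->
  K \subset S -> clique e K -> rooted_clique_td e S K.
Proof.
move=> IH KS cK; rewrite S_C_NC.
have NC_S_C : NC \subset S :\: C by apply/subsetP => z; rewrite !inE => /andP[/andP[-> ->]].
have NC_C_NC : NC \subset C :|: NC by exact: subsetUr.
have [KS_C|KC_NC] := clique_sub_S_C_or_C_NC KS cK.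
  apply: (rooted_clique_td_glue (IH _ _ card_S_C KS_C cK) (IH _ _ card_C_NC NC_C_NC NC_clique)
          NC_S_C NC_clique); first by rewrite setIC C_NC_meet.
  by move=> y z yS zC; rewrite (proj1 e_simple); exact: C_NC_no_cross.
rewrite setUC; apply: (rooted_clique_td_glue (IH _ _ card_C_NC KC_NC cK)
  (IH _ _ card_S_C NC_S_C NC_clique) NC_C_NC NC_clique C_NC_meet C_NC_no_cross).
Qed.

End Separator.

Lemma chordal_rooted_clique_td (S K : {set T}) :
  K \subset S -> clique e K -> rooted_clique_td e S K.
Proof.
elim: {S}_.+1 {-2}S (ltnSn #|S|) K => // n IH S leS K KS cK.
have IHS (S' K' : {set T}) :
    #|S'| < #|S| -> K' \subset S' -> clique e K' -> rooted_clique_td e S' K'.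
  by move=> ltS'; apply: IH; rewrite (leq_trans ltS').
case: (set_0Vmem S) => [S0|[x xS]].
  by move: KS; rewrite S0 subset0 => /eqP->; exact: rooted_clique_td0.
have [/existsP[r0 /and3P[r0S r0x x_nadj_r0]]|/existsPn univ] :=
  boolP [exists r, [&& r \in S, r != x & ~~ e x r]].
  exact: (rooted_clique_td_separate xS r0S r0x x_nadj_r0).
apply: (rooted_clique_td_add_universal xS) => //.
  by move=> z zS zx; have := univ z; rewrite zS zx /= negbK.
apply: IHS; first by rewrite (cardsD1 x S) xS.
  exact: setSD.
by apply/cliqueP => y z /setD1P[_ yK] /setD1P[_ zK]; exact: (cliqueP _ _ cK).
Qed.

Lemma chordal_clique_td : exists (V : finType) (t : rel V) (beta : V -> {set T}),
  tree_decomposition e t beta /\ forall v, clique e (beta v).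
Proof.
have [V [par [r [beta [rt [_ cl cov edg ri] _]]]]] :=
  chordal_rooted_clique_td (subsetT set0) (clique0 e).
exists V, (parent_rel par), beta; split => //; split => //.
- exact: parent_rel_tree rt.
- by move=> x; apply: cov; rewrite inE.
- by move=> x y; apply: edg; rewrite inE.
Qed.

End Construction.

(** * Proper tree decompositions *)

Lemma mem_bags (T V : finType) (beta : V -> {set T}) v : beta v \in bags beta.
Proof. exact: imset_f. Qed.

Section ProperTD.
Variables (T V : finType) (e : rel T) (t : rel V) (beta : V -> {set T}).
Hypothesis beta_proper : proper_td e t beta.

Lemma proper_td_bag_maximal v w : beta v \subset beta w -> beta v = beta w.
Proof.
case: beta_proper => td not_subsumed vw; apply/eqP/negPn/negP => neq_vw.
have vw' : beta v \proper beta w by rewrite properEneq neq_vw.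
have [beta' [td' le' vN']] := td_drop_bag td vw'.
apply: (not_subsumed _ _ _ td'); split => // /subsetP/(_ (beta v)).
by rewrite (negbTE vN') => /(_ (mem_bags beta v)).
Qed.

Lemma proper_td_clique_bags : simple_graph e -> chordal e -> forall v, clique e (beta v).
Proof.
case: beta_proper => td not_subsumed e_simple e_chordal v.
have [V' [t' [beta' [td' cl']]]] := chordal_clique_td e_simple e_chordal.
have le' : td_le beta' beta by move=> v'; exact: td_clique_sub_bag td (cl' v').
have /subsetP bags_sub : bags beta \subset bags beta'.
  by apply/negPn/negP => nsub; apply: (not_subsumed _ _ _ td'); split => //; exact/negP.
by have /imsetP[v' _ ->] := bags_sub _ (mem_bags beta v).
Qed.

End ProperTD.

Theorem proposition4 (T : finType) (e : rel T) (V : finType) (t : rel V)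
    (beta : V -> {set T}) :
  simple_graph e -> chordal e -> proper_td e t beta ->
  bags beta = MaxClq e.
Proof.
move=> e_simple e_chordal proper; have [td _] := proper.
have clique_bag := proper_td_clique_bags proper e_simple e_chordal.
apply/setP => K; rewrite inE; apply/imsetP/maxsetP.
- case=> v _ ->; split => // B cB vB; have [w Bw] := td_clique_sub_bag td cB.
  by apply/eqP; rewrite eqEsubset vB (proper_td_bag_maximal proper (subset_trans vB Bw)) Bw.
- case=> cK maxK; have [v Kv] := td_clique_sub_bag td cK.
  by exists v; rewrite // (maxK _ (clique_bag v) Kv).
Qed.
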